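(* Let $\mathcal{M}$ be a finite $\mathcal{R}$-trivial monoid and let $\mathcal{S}$ be a generating set for $\mathcal{M}$ (as a monoid). Two elements $\sigma,\sigma'\in\mathcal{M}$ have the same loop-type if and only if $\mathcal{L}^{\mathcal{S}}_\sigma=\mathcal{L}^{\mathcal{S}}_{\sigma'}$.
   Context: $\mathcal{M}$ is $\mathcal{R}$-trivial: $\sigma\mathcal{M}=\tau\mathcal{M}$ implies $\sigma=\tau$. For $\sigma\in\mathcal{M}$, $\mathcal{L}_\sigma:=\{\tau\in\mathcal{M}:\sigma\tau=\sigma\}$ and $\mathcal{L}^{\mathcal{S}}_\sigma:=\mathcal{L}_\sigma\cap\mathcal{S}=\{\kappa\in\mathcal{S}:\sigma\kappa=\sigma\}$. Elements $\sigma,\sigma'$ have the same loop-type ($\sigma\sim\sigma'$) if $\mathcal{L}_\sigma=\mathcal{L}_{\sigma'}$. *)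

From mathcomp Require Import all_boot.
Set Implicit Arguments. Unset Strict Implicit. Unset Printing Implicit Defensive.

Definition is_monoid (M : finType) (mul : M -> M -> M) (one : M) : Prop :=
  (forall a b c, mul a (mul b c) = mul (mul a b) c) /\
  (forall a, mul one a = a) /\ (forall a, mul a one = a).

Definition right_ideal (M : finType) (mul : M -> M -> M) (s : M) : {set M} :=
  [set mul s x | x : M].

Definition R_trivial (M : finType) (mul : M -> M -> M) : Prop :=
  forall s t : M, right_ideal mul s = right_ideal mul t -> s = t.

Definition generates (M : finType) (mul : M -> M -> M) (one : M) (S : {set M}) : Prop :=
  forall m : M, exists w : seq M, all (fun x => x \in S) w /\ foldr mul one w = m.

Definition Lset (M : finType) (mul : M -> M -> M) (s : M) : {set M} :=
  [set t : M | mul s t == s].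

Definition LSset (M : finType) (mul : M -> M -> M) (S : {set M}) (s : M) : {set M} :=
  Lset mul s :&: S.

Definition same_loop_type (M : finType) (mul : M -> M -> M) (s s' : M) : Prop :=
  Lset mul s = Lset mul s'.

From mathcomp Require Import all_boot.

(* In an R-trivial monoid the stabiliser
   L_sigma = { tau | sigma tau = sigma } is "factor closed": if
   sigma (a b) = sigma then already sigma a = sigma, because sigma a M and
   sigma M contain each other.  Hence a product a_1 ... a_k lies in L_sigma
   iff every factor a_i does.  Since S generates M, membership of any tau in
   L_sigma is therefore determined by L_sigma ∩ S = L^S_sigma, which gives
   the nontrivial direction of the theorem; the other direction is immediate
   by intersecting with S. *)

Section RTrivialStabilisers.

Variables (M : finType) (mul : M -> M -> M) (one : M).
Hypothesis hmon : is_monoid mul one.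
Hypothesis hR : R_trivial mul.

(* Prefix closure of stabilisers: sigma (a b) = sigma forces sigma a = sigma,
   since the principal right ideals of sigma a and sigma coincide. *)
Lemma stab_prefix (s a b : M) : mul s (mul a b) = s -> mul s a = s.
Proof.
case: hmon => mulA _ sab_eq; apply: hR; apply/setP => y.
apply/imsetP/imsetP => [[x _ ->]|[x _ ->]].
  by exists (mul a x) => //; rewrite mulA.
by exists (mul b x) => //; rewrite -{1}sab_eq !mulA.
Qed.

Lemma stab_word (s : M) (w : seq M) :
  (mul s (foldr mul one w) == s) = all (fun x => mul s x == s) w.
Proof.
case: hmon => mulA [_ mulr1].
elim: w => [|x w IHw] /=; first by rewrite mulr1 eqxx.
apply/eqP/andP => [sxw_eq | [/eqP sx_eq sw_eq]].
  have sx_eq := stab_prefix _ _ _ sxw_eq.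
  split; first by rewrite sx_eq.
  by rewrite -IHw -{2}sxw_eq mulA sx_eq.
by rewrite mulA sx_eq; apply/eqP; rewrite IHw.
Qed.

Lemma Lset_determined_by_LSset (S : {set M}) (s s' : M) :
  generates mul one S -> LSset mul S s = LSset mul S s' -> Lset mul s = Lset mul s'.
Proof.
move=> genS /setP traceS; apply/setP => t; rewrite !inE.
have [w [w_in_S <-]] := genS t.
rewrite !stab_word; apply: eq_in_all => x /(allP w_in_S) xS.
by have := traceS x; rewrite !inE xS !andbT.
Qed.

End RTrivialStabilisers.

Theorem mainTheorem5 (M : finType) (mul : M -> M -> M) (one : M) (S : {set M})
  (hmon : is_monoid mul one) (hR : R_trivial mul) (hS : generates mul one S)
  (s s' : M) :
  same_loop_type mul s s' <-> LSset mul S s = LSset mul S s'.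
Proof.
split => [same_L | same_LS]; first by rewrite /LSset same_L.
exact: Lset_determined_by_LSset hmon hR _ _ _ hS same_LS.
Qed.
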